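(* Let $\mathcal{H}=(V,E)$ be a hypergraph and $S\subseteq V$. If $\mathsf{red}(\mathcal{H}[S])$ admits a lower bound of $\Omega(n/p^{\epsilon})$, then $\mathcal{H}$ also admits the same lower bound $\Omega(n/p^{\epsilon})$.
   Context: Natural join queries are sets of relations (no repeated relation, distinct schemas); a query's hypergraph has the query's variables as vertices and the relation schemas as edges. $\mathcal{H}[S]$ is the hypergraph with vertex set $S$ and edges $\{S\cap e: e\in E, S\cap e\ne\emptyset\}$; $\mathsf{red}$ removes every edge $e$ contained in another edge $e'\ne e$. MPC model: $p$ machines, synchronous rounds of communication then local computation; the load is the maximum data received by any machine in any round. A tuple-based MPC algorithm transmits only (copies of) input tuples in their entirety, and a machine may output a tuple $t$ only if it has received $\pi_{\mathrm{vars}(R)}t$ for every relation $R$ of the query. A hypergraph $\mathcal{G}$ admits a lower bound of $\Omega(n/p^{\epsilon})$ if there exist join queries with hypergraph $\mathcal{G}$ and input size at most $n$ such that every tuple-based MPC algorithm (with a constant number of rounds) computing them on $p$ machines needs load $\Omega(n/p^{\epsilon})$. *)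

From HB Require Import structures.
From mathcomp Require Import all_boot.
From mathcomp Require Import finmap.
From Stdlib Require Import Reals.

Set Implicit Arguments.
Unset Strict Implicit.
Unset Printing Implicit Defensive.

Local Open Scope fset_scope.

Record hypergraph (V : finType) := Hypergraph {
  hvert : {set V};
  hedges : {set {set V}} }.

Definition induced (V : finType) (G : hypergraph V) (S : {set V}) : hypergraph V :=
  Hypergraph S [set S :&: e | e in hedges G & S :&: e != set0].

Definition red (V : finType) (G : hypergraph V) : hypergraph V :=
  Hypergraph (hvert G)
    [set e in hedges G | [forall e' in hedges G, (e' != e) ==> ~~ (e \subset e')]].

(* Tuples: assignments of (natural-number) values to variables; a tuple over
   the schema e is represented by its values on e, with value 0 elsewhere. *)
Definition tup (V : finType) := {ffun V -> nat}.

Definition proj (V : finType) (e : {set V}) (t : tup V) : tup V :=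
  [ffun v => if v \in e then t v else 0%N].

(* A join query with hypergraph G: one relation (finite set of tuples over
   schema e) for every edge e of G. *)
Definition instance (V : finType) := {set V} -> {fset tup V}.

Definition wf_instance (V : finType) (G : hypergraph V) (I : instance V) : Prop :=
  forall e, e \in hedges G -> forall t, t \in I e -> proj e t = t.

Definition input_size (V : finType) (G : hypergraph V) (I : instance V) : nat :=
  (\sum_(e in hedges G) #|` I e|)%N.

Definition join_result (V : finType) (G : hypergraph V) (I : instance V) (t : tup V) : Prop :=
  forall e, e \in hedges G -> proj e t \in I e.

(* Communication trace of a tuple-based MPC run with r rounds and p machines:
   tr k i = the set of (relation, tuple) messages received by machine i in round k. *)
Definition trace (V : finType) (r p : nat) := 'I_r -> 'I_p -> {fset ({set V} * tup V)}.

Definition tuple_based (V : finType) (G : hypergraph V) (I : instance V) r p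
  (tr : trace V r p) : Prop :=
  forall k i x, x \in tr k i -> x.1 \in hedges G /\ x.2 \in I x.1.

(* Every join result is output by some machine, which may output t only if it
   has received pi_e t for every relation e. *)
Definition computes (V : finType) (G : hypergraph V) (I : instance V) r p
  (tr : trace V r p) : Prop :=
  forall t, join_result G I t ->
    exists i : 'I_p, forall e, e \in hedges G -> exists k : 'I_r, (e, proj e t) \in tr k i.

Definition load (V : finType) r p (tr : trace V r p) : nat :=
  (\max_(k < r) \max_(i < p) #|` tr k i|)%N.

(* G admits a lower bound Omega(n / p^eps) for tuple-based MPC algorithms with
   a constant number r of rounds. *)
Definition admits_lb (V : finType) (G : hypergraph V) (eps : R) : Prop :=
  forall r : nat, exists c : R, (0 < c)%R /\
    exists N : nat -> nat, forall p n : nat, (1 <= p)%N -> (N p <= n)%N ->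
      exists I : instance V, wf_instance G I /\ (input_size G I <= n)%N /\
        forall tr : trace V r p, tuple_based G I tr -> computes G I tr ->
          (c * INR n / Rpower (INR p) eps <= INR (load tr))%R.

(* Hard instances for red(H[S]) are lifted to H: the relation of an edge e is
   the projection onto e of the relation of an edge e' of red(H[S]) containing
   S :&: e, so the input grows by a factor of at most |E|.  Conversely, a
   tuple-based run on the lifted instance becomes a run on the original one
   with no larger load: keep only the messages of relations e whose trace
   S :&: e is an edge of red(H[S]) (as the edges of red(H[S]) form an
   antichain, these carry tuples of that very relation) and relabel them
   S :&: e.  Every join result t of the
   original instance is still output, because proj S t is a join result of the
   lifted one.  The lower bound thus transfers with its constant divided by
   2(|E| + 1). *)

From mathcomp Require Import all_boot finmap zify.
From Stdlib Require Import Reals Lra.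

Set Implicit Arguments.
Unset Strict Implicit.
Unset Printing Implicit Defensive.

Local Open Scope fset_scope.

Lemma proj_proj (V : finType) (A B : {set V}) (t : tup V) :
  proj A (proj B t) = proj (A :&: B) t.
Proof. by apply/ffunP => v; rewrite !ffunE inE; case: (v \in A); case: (v \in B). Qed.

Section Reduction.

Variables (V : finType) (G : hypergraph V).

Lemma red_edge (e : {set V}) : e \in hedges (red G) -> e \in hedges G.
Proof. by rewrite inE => /andP[]. Qed.

Lemma red_edges_antichain (e1 e2 : {set V}) :
  e1 \in hedges (red G) -> e2 \in hedges (red G) -> e1 \subset e2 -> e1 = e2.
Proof.
rewrite inE => /andP[_ /forall_inP max_e1] /red_edge e2G sub12.
by apply/eqP; move: (max_e1 _ e2G); rewrite sub12 implybF negbK eq_sym.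
Qed.

Lemma red_edges_cover (e : {set V}) :
  e \in hedges G -> exists2 e', e' \in hedges (red G) & e \subset e'.
Proof.
pose above B := (B \in hedges G) && (e \subset B).
move=> eG; have above_e : above e by rewrite /above eG subxx.
case: (arg_maxnP (fun B : {set V} => #|B|) above_e) => B /andP[BG eB] B_max.
exists B => //; rewrite inE BG; apply/forall_inP => e2 e2G; apply/implyP => e2B.
apply/negP => Be2; have /B_max : above e2.
  by rewrite /above e2G (subset_trans eB Be2).
by apply/negP; rewrite -ltnNge proper_card // properEneq eq_sym e2B Be2.
Qed.

End Reduction.

Section Induced.

Variables (V : finType) (G : hypergraph V) (S : {set V}).

Lemma induced_edgeP (e' : {set V}) :
  e' \in hedges (induced G S) -> exists2 e, e \in hedges G & e' = S :&: e.
Proof. by case/imsetP => e; rewrite inE => /andP[eG _] ->; exists e. Qed.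

Lemma mem_induced_edge (e : {set V}) :
  e \in hedges G -> S :&: e != set0 -> S :&: e \in hedges (induced G S).
Proof. by move=> eG Se; apply/imsetP; exists e; rewrite // inE eG. Qed.

End Induced.

Lemma leq_2mul_divn (m n : nat) : (0 < m <= n)%N -> (n <= 2 * m * (n %/ m))%N.
Proof.
case/andP=> m_gt0 le_mn; rewrite {1}(divn_eq n m).
have : (m <= n %/ m * m)%N by rewrite -[m in (m <= _)%N]mul1n leq_mul2r divn_gt0 // le_mn orbT.
have := ltn_pmod n m_gt0; lia.
Qed.

Lemma Rdiv_scale_le (c P : R) (k n n' : nat) :
  (0 < c)%R -> (0 < P)%R -> (0 < k)%N -> (n <= k * n')%N ->
  (c / INR k * INR n / P <= c * INR n' / P)%R.
Proof.
move=> c_gt0 P_gt0 /ltP/lt_0_INR k_gt0 /leP/le_INR; rewrite mult_INR => le_nkn.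
have -> : (c / INR k * INR n / P = c / (INR k * P) * INR n)%R by field; lra.
have -> : (c * INR n' / P = c / (INR k * P) * (INR k * INR n'))%R by field; lra.
apply: Rmult_le_compat_l le_nkn; apply/Rlt_le/Rdiv_lt_0_compat => //.
exact: Rmult_lt_0_compat.
Qed.

Section Simulation.

Variables (V : finType) (G G' : hypergraph V) (m : nat).
Variable lift : instance V -> instance V.
Variable restrict : forall r p, trace V r p -> trace V r p.

Hypothesis lift_wf :
  forall I', wf_instance G' I' -> wf_instance G (lift I').
Hypothesis input_size_lift :
  forall I', (input_size G (lift I') <= m * input_size G' I')%N.
Hypothesis tuple_based_restrict :
  forall I' r p (tr : trace V r p), wf_instance G' I' ->
    tuple_based G (lift I') tr -> tuple_based G' I' (restrict tr).
Hypothesis computes_restrict :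
  forall I' r p (tr : trace V r p), (0 < p)%N ->
    computes G (lift I') tr -> computes G' I' (restrict tr).
Hypothesis load_restrict :
  forall r p (tr : trace V r p), (load (restrict tr) <= load tr)%N.

Lemma admits_lb_simulation (eps : R) : admits_lb G' eps -> admits_lb G eps.
Proof.
move=> lbG' r; have [c [c_gt0 [N lb]]] := lbG' r.
(* dividing by [m.+1] rather than [m] also covers [m = 0] *)
exists (c / INR (2 * m.+1))%R; split.
  by apply: Rdiv_lt_0_compat => //; apply/lt_0_INR/ltP.
exists (fun p => m.+1 * (N p).+1)%N => p n p_gt0 Nn.
pose n' := (n %/ m.+1)%N.
have Nn' : (N p < n')%N by rewrite leq_divRL // mulnC.
have [I' [I'wf [I'size lbI']]] := lb p n' p_gt0 (ltnW Nn').
exists (lift I'); split; [exact: lift_wf | split].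
  apply: leq_trans (input_size_lift I') (leq_trans (leq_mul (leqnSn m) I'size) _).
  by rewrite mulnC leq_divM.
move=> tr trG compG.
have := lbI' _ (tuple_based_restrict I'wf trG) (computes_restrict p_gt0 compG).
move/Rle_trans/(_ (le_INR _ _ (elimT leP (load_restrict tr)))).
apply: Rle_trans; apply: Rdiv_scale_le => //; first exact: exp_pos.
by rewrite leq_2mul_divn // (leq_trans _ Nn) // leq_pmulr.
Qed.

End Simulation.

Section InducedReducedQuery.

Variables (V : finType) (E : {set {set V}}) (S : {set V}).

Let G := Hypergraph [set: V] E.
Let G' := red (induced G S).

Definition lift_instance (I' : instance V) : instance V := fun e =>
  if [pick e' in hedges G' | S :&: e \subset e'] is Some e' then proj e @` I' e'
  else fset0.

Definition restrict_trace r p (tr : trace V r p) : trace V r p := fun k i =>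
  [fset (S :&: x.1, x.2) | x in [fset x in tr k i | S :&: x.1 \in hedges G']].

Lemma induced_red_cover (e : {set V}) :
  hedges G' != set0 -> e \in E -> exists2 e', e' \in hedges G' & S :&: e \subset e'.
Proof.
case/set0Pn => e0 e0G' eE; have [-> | Se] := eqVneq (S :&: e) set0.
  by exists e0; rewrite ?sub0set.
exact/red_edges_cover/mem_induced_edge.
Qed.

Lemma lift_instance_wf (I' : instance V) : wf_instance G (lift_instance I').
Proof.
move=> e _ t; rewrite /lift_instance; case: pickP => [e' _ | _]; last by rewrite in_fset0.
by case/imfsetP => u /= _ ->; rewrite proj_proj setIid.
Qed.

Lemma input_size_lift_instance (I' : instance V) :
  (input_size G (lift_instance I') <= #|E| * input_size G' I')%N.
Proof.
rewrite /input_size /= -sum_nat_const; apply: leq_sum => e _.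
rewrite /lift_instance; case: pickP => [e' /andP[e'G' _] | _]; last by rewrite cardfs0.
apply: leq_trans (leq_imfset_card _ _ _) _.
by rewrite (bigD1 e') //= leq_addr.
Qed.

Lemma mem_lift_instance (I' : instance V) (e : {set V}) (t : tup V) :
  wf_instance G' I' -> S :&: e \in hedges G' ->
  t \in lift_instance I' e -> t \in I' (S :&: e).
Proof.
move=> I'wf SeG'; rewrite /lift_instance; case: pickP; last by rewrite in_fset0.
move=> e' /andP[e'G' /(red_edges_antichain SeG' e'G') <-].
case/imfsetP => u /= uI' ->; have uSe := I'wf _ SeG' _ uI'.
by rewrite -uSe proj_proj setIA [e :&: S]setIC -setIA setIid uSe.
Qed.

Lemma join_result_lift (I' : instance V) (t : tup V) :
  hedges G' != set0 -> join_result G' I' t ->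
  join_result G (lift_instance I') (proj S t).
Proof.
move=> G'_ne0 joint e eE; rewrite /lift_instance; case: pickP => [e' | no_e'].
  case/andP=> e'G' Se_e'; apply/imfsetP; exists (proj e' t); first exact: joint.
  have [e2 _ e'E] := induced_edgeP (red_edge e'G').
  rewrite !proj_proj; congr proj; apply/setP => v; move: (subsetP Se_e' v).
  by rewrite e'E !inE; case: (v \in S); case: (v \in e) => //= ->.
have [e' e'G' Se_e'] := induced_red_cover G'_ne0 eE.
by move: (no_e' e'); rewrite e'G' Se_e'.
Qed.

Lemma tuple_based_restrict_trace I' r p (tr : trace V r p) :
  wf_instance G' I' -> tuple_based G (lift_instance I') tr ->
  tuple_based G' I' (restrict_trace tr).
Proof.
move=> I'wf trG k i x /imfsetP[y /=]; rewrite inE => /andP[y_tr SyG'] -> /=.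
by split=> //; apply: mem_lift_instance I'wf SyG' (trG k i y y_tr).2.
Qed.

Lemma computes_restrict_trace I' r p (tr : trace V r p) :
  (0 < p)%N -> computes G (lift_instance I') tr -> computes G' I' (restrict_trace tr).
Proof.
move=> p_gt0 compG t joint; have [G'0 | G'_ne0] := eqVneq (hedges G') set0.
  by exists (Ordinal p_gt0) => e; rewrite G'0 inE.
have [i out_i] := compG _ (join_result_lift G'_ne0 joint).
exists i => e' e'G'; have [e eE e'E] := induced_edgeP (red_edge e'G').
have [k ek] := out_i e eE; exists k; apply/imfsetP.
exists (e, proj e (proj S t)); first by rewrite inE; apply/andP; rewrite /= -e'E.
by rewrite /= proj_proj e'E setIC.
Qed.

Lemma load_restrict_trace r p (tr : trace V r p) :
  (load (restrict_trace tr) <= load tr)%N.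
Proof.
apply/bigmax_leqP => k _; apply/bigmax_leqP => i _.
apply: leq_trans _ (leq_bigmax k); apply: leq_trans _ (leq_bigmax i).
apply: leq_trans (leq_imfset_card _ _ _) _.
exact: fsubset_leq_card (fset_sub (tr k i) _).
Qed.

End InducedReducedQuery.

Theorem lemma5p3 (V : finType) (E : {set {set V}}) (S : {set V}) (eps : R) :
  admits_lb (red (induced (Hypergraph [set: V] E) S)) eps ->
  admits_lb (Hypergraph [set: V] E) eps.
Proof.
apply: (admits_lb_simulation (m := #|E|) (lift := lift_instance E S)
          (restrict := restrict_trace E S)).
- by move=> I' _; apply: lift_instance_wf.
- exact: input_size_lift_instance.
- exact: tuple_based_restrict_trace.
- exact: computes_restrict_trace.
- exact: load_restrict_trace.
Qed.
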